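(* On each of the three charts of $\mathbb OP^2$, with chart coordinates $(u,v)\in\mathbb O^2$, consider the quadratic form on tangent vectors $(du,dv)=(\xi,\eta)\in\mathbb O^2$ $$ds^2=\frac{|\xi|^2(1+|v|^2)+|\eta|^2(1+|u|^2)-2\,\mathrm{Re}\big[(u\bar v)(\eta\bar\xi)\big]}{(1+|u|^2+|v|^2)^2}.$$ Then these expressions are positive definite and agree on chart overlaps, so they define a Riemannian metric on $\mathbb OP^2$.
   Context: Octonions: $\mathbb O=\mathbb H\oplus\mathbb H$ with product $(q_1,q_2)(p_1,p_2)=(q_1p_1-\bar p_2q_2,\ p_2q_1+q_2\bar p_1)$, conjugation $\overline{(q_1,q_2)}=(\bar q_1,-q_2)$, $\mathrm{Re}(a)$ the real part of the first quaternion component, inner product $\langle a,b\rangle=\mathrm{Re}(a\bar b)$, $|a|^2=\langle a,a\rangle$. $\mathbb OP^2=\mathcal U/_\sim$ where $\mathcal U=(\{1\}\times\mathbb O\times\mathbb O)\cup(\mathbb O\times\{1\}\times\mathbb O)\cup(\mathbb O\times\mathbb O\times\{1\})$ and $[a,b,c]\sim[d,e,f]$ iff $a=d\lambda,b=e\lambda,c=f\lambda$ for some $\lambda\in\mathbb O\setminus\{0\}$. The charts are $[1,u,v]\mapsto(u,v)$, $[u,1,v]\mapsto(u,v)$, $[u,v,1]\mapsto(u,v)$; transition maps are e.g. $(a,b)\mapsto(a^{-1},ba^{-1})$ between the first two. *)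

From HB Require Import structures.
From mathcomp Require Import all_boot all_order all_algebra.
From mathcomp Require Import all_classical all_reals all_analysis.
Set Implicit Arguments. Unset Strict Implicit. Unset Printing Implicit Defensive.
Import Order.TTheory GRing.Theory Num.Theory.
Import numFieldNormedType.Exports.
Local Open Scope ring_scope.

Section Octonions.
Variable R : realType.

(* Quaternions: a + b i + c j + d k represented as ((a,b),c),d). *)
Definition quat := (R * R * R * R)%type.
Definition oct := (quat * quat)%type.

Definition hmul (x y : quat) : quat :=
  let: (a1, b1, c1, d1) := x in
  let: (a2, b2, c2, d2) := y in
  (a1*a2 - b1*b2 - c1*c2 - d1*d2,
   a1*b2 + b1*a2 + c1*d2 - d1*c2,
   a1*c2 - b1*d2 + c1*a2 + d1*b2,
   a1*d2 + b1*c2 - c1*b2 + d1*a2).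

Definition hconj (x : quat) : quat :=
  let: (a, b, c, d) := x in (a, - b, - c, - d).

Definition hre (x : quat) : R := x.1.1.1.

Definition omul (q p : oct) : oct :=
  (hmul q.1 p.1 - hmul (hconj p.2) q.2, hmul p.2 q.1 + hmul q.2 (hconj p.1)).

Definition oconj (q : oct) : oct := (hconj q.1, - q.2).

Definition ore (q : oct) : R := hre q.1.

Definition oinner (a b : oct) : R := ore (omul a (oconj b)).

Definition onorm2 (a : oct) : R := oinner a a.

Definition one_oct : oct := ((1, 0, 0, 0), 0).

Definition oinv (a : oct) : oct := (onorm2 a)^-1 *: oconj a.

Definition odivr (a b : oct) : oct := omul a (oinv b).

Definition ds2 (p w : oct * oct) : R :=
  let: (u, v) := p in
  let: (xi, eta) := w in
  (onorm2 xi * (1 + onorm2 v) + onorm2 eta * (1 + onorm2 u)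
     - 2 * ore (omul (omul u (oconj v)) (omul eta (oconj xi))))
  / (1 + onorm2 u + onorm2 v) ^+ 2.

Definition chart_lift (i : 'I_3) (p : oct * oct) : oct * oct * oct :=
  match val i with
  | 0 => (one_oct, p.1, p.2)
  | 1 => (p.1, one_oct, p.2)
  | _ => (p.1, p.2, one_oct)
  end.

Definition hcoord (j : 'I_3) (x : oct * oct * oct) : oct :=
  match val j with
  | 0 => x.1.1
  | 1 => x.1.2
  | _ => x.2
  end.

Definition chart_map (j : 'I_3) (x : oct * oct * oct) : oct * oct :=
  let: (x1, x2, x3) := x in
  match val j with
  | 0 => (odivr x2 x1, odivr x3 x1)
  | 1 => (odivr x1 x2, odivr x3 x2)
  | _ => (odivr x1 x3, odivr x2 x3)
  end.

(* Transition map from chart i to chart j, defined where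
   hcoord j (chart_lift i p) != 0.  E.g. transition 0 1 (a,b) = (a^-1, b a^-1). *)
Definition transition (i j : 'I_3) (p : oct * oct) : oct * oct :=
  chart_map j (chart_lift i p).

End Octonions.

(* Positivity: the numerator of ds^2 is |xi|^2 + |eta|^2 plus
   |xi|^2 |v|^2 + |eta|^2 |u|^2 - 2 Re[(u conj v)(eta conj xi)].  Since Re(xy) = <x, conj y>
   and the octonion norm is multiplicative, Cauchy-Schwarz bounds the cross term by
   |u| |v| |xi| |eta|, and AM-GM makes the last three terms nonnegative.
   Invariance: each transition map is the identity or T(a, b) = (a^-1, b a^-1) composed
   on either side with the swap (u, v) |-> (v, u), which preserves ds^2.  Writing
   a^-1 = conj a / |a|^2, the differential of T is computed coordinatewise, and
   ds^2(T p, dT w) = ds^2(p, w) reduces to a rational identity between the real invariants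
   |a|^2, |b|^2, |xi|^2, |eta|^2, <a, xi>, <eta, b> and <eta conj a, b conj xi>. *)

From Pilot Require Import Defs.
From HB Require Import structures.
From mathcomp Require Import all_boot all_order all_algebra.
From mathcomp Require Import all_classical all_reals all_analysis.
From mathcomp Require Import ring lra.
Import Order.TTheory GRing.Theory Num.Theory.
Import numFieldNormedType.Exports.
Local Open Scope classical_set_scope.
Local Open Scope ring_scope.

(* [cbn] exposes the componentwise operations [add_pair], [scale_pair], [pair_opp] of
   the product structures; unfolding them computes sums of tuples. *)
Ltac pair_simpl := cbn; repeat (progress unfold add_pair, scale_pair, pair_opp; cbn).

Ltac split_pairs := repeat match goal with |- (_, _) = (_, _) => congr (_, _) end.

Ltac oct_ring :=
  repeat match goal with x : oct _ |- _ => destruct x as [[[[? ?] ?] ?] [[[? ?] ?] ?]] end;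
  rewrite /onorm2 /oinner /omul /hmul /hconj /oconj /ore /hre /one_oct /=;
  pair_simpl; split_pairs; ring.

Section OctonionAlgebra.
Context {R : realType}.
Local Notation oct := (oct R).
Implicit Types x y : oct.

Lemma omul1l x : omul (one_oct R) x = x. Proof. oct_ring. Qed.
Lemma onorm2_one : onorm2 (one_oct R) = 1. Proof. oct_ring. Qed.

Lemma odivr1 x : odivr x (one_oct R) = x.
Proof. by rewrite /odivr /Defs.oinv onorm2_one invr1 scale1r; oct_ring. Qed.

Lemma onorm2E x : onorm2 x = x.1.1.1.1 ^+ 2 + x.1.1.1.2 ^+ 2 + x.1.1.2 ^+ 2 + x.1.2 ^+ 2
  + x.2.1.1.1 ^+ 2 + x.2.1.1.2 ^+ 2 + x.2.1.2 ^+ 2 + x.2.2 ^+ 2.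
Proof. oct_ring. Qed.

Lemma onorm2_ge0 x : 0 <= onorm2 x.
Proof. by rewrite onorm2E; do 7 (apply: addr_ge0; last exact: sqr_ge0); exact: sqr_ge0. Qed.

Lemma onorm2_eq0 x : (onorm2 x == 0) = (x == 0).
Proof.
rewrite onorm2E !paddr_eq0 ?sqr_ge0 ?addr_ge0 ?sqr_ge0 // !sqrf_eq0.
case: x => [[[[? ?] ?] ?] [[[? ?] ?] ?]] /=.
by rewrite -[0 : oct]/(0, 0, 0, 0, (0, 0, 0, 0)) !xpair_eqE !andbA.
Qed.

Lemma onorm2_gt0 x : x != 0 -> 0 < onorm2 x.
Proof. by move=> x0; rewrite lt_neqAle eq_sym onorm2_eq0 x0 onorm2_ge0. Qed.

Lemma onorm2M x y : onorm2 (omul x y) = onorm2 x * onorm2 y.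
Proof. oct_ring. Qed.

Lemma onorm2_conj x : onorm2 (oconj x) = onorm2 x.
Proof. oct_ring. Qed.

Lemma ore_omul x y : ore (omul x y) = oinner x (oconj y).
Proof. oct_ring. Qed.

Lemma onorm2_scaleB (t : R) x y :
  onorm2 (t *: x - y) = t ^+ 2 * onorm2 x - 2 * t * oinner x y + onorm2 y.
Proof. oct_ring. Qed.

Lemma oinner_sqr_le x y : oinner x y ^+ 2 <= onorm2 x * onorm2 y.
Proof.
have [->|x0] := eqVneq x 0.
  have -> : oinner 0 y = 0 by oct_ring.
  by rewrite expr2 mul0r mulr_ge0 ?onorm2_ge0.
have Nx : 0 < onorm2 x by exact: onorm2_gt0.
have := onorm2_ge0 (oinner x y / onorm2 x *: x - y).
rewrite onorm2_scaleB -(ler_pM2l Nx) mulr0.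
set c := oinner x y; set N := onorm2 x; set Y := onorm2 y.
have -> : N * ((c / N) ^+ 2 * N - 2 * (c / N) * c + Y) = N * Y - c ^+ 2.
  by field; rewrite gt_eqF.
by rewrite subr_ge0.
Qed.

Lemma oreD_omul_conj x y : ore (omul y (oconj x) + omul x (oconj y)) = 2 * oinner x y.
Proof. oct_ring. Qed.

End OctonionAlgebra.

Lemma amgm_sqr_le (R : realFieldType) (m P Q : R) :
  0 <= P -> 0 <= Q -> m ^+ 2 <= P * Q -> 2 * m <= P + Q.
Proof. move=> P0 Q0 mPQ; have := sqr_ge0 (P - Q); nra. Qed.

Section Positivity.
Context {R : realType}.
Local Notation oct := (oct R).

Lemma ds2_cross_le (u v xi eta : oct) :
  2 * ore (omul (omul u (oconj v)) (omul eta (oconj xi))) <=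
  onorm2 xi * onorm2 v + onorm2 eta * onorm2 u.
Proof.
have := oinner_sqr_le (omul u (oconj v)) (oconj (omul eta (oconj xi))).
rewrite -ore_omul onorm2_conj !onorm2M !onorm2_conj => CS.
apply: amgm_sqr_le; rewrite ?mulr_ge0 ?onorm2_ge0 //.
by rewrite [X in _ <= X](_ : _ = onorm2 u * onorm2 v * (onorm2 eta * onorm2 xi)) //; ring.
Qed.

Lemma ds2_gt0 (p w : oct * oct) : w != 0 -> 0 < ds2 p w.
Proof.
case: p w => u v [xi eta] w0; rewrite /ds2.
have XE : 0 < onorm2 xi + onorm2 eta.
  have := onorm2_ge0 xi; have := onorm2_ge0 eta.
  move: w0; rewrite -[0 : oct * oct]/(0, 0) xpair_eqE negb_and.
  by case/orP => /onorm2_gt0; lra.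
have := ds2_cross_le u v xi eta; have := onorm2_ge0 u; have := onorm2_ge0 v.
move: XE; set m := ore _; set U := onorm2 u; set V := onorm2 v.
set X := onorm2 xi; set E := onorm2 eta => XE V0 U0 cross.
by apply: divr_gt0; [nra | rewrite exprn_gt0 //; lra].
Qed.

End Positivity.

Section PairDerive.
Context {R : realType} {V W1 W2 : normedModType R}.

Fact is_derive_cvg {W : normedModType R} {f : V -> W} {x v df} :
  is_derive x v f df ->
  (fun h => h^-1 *: ((f \o shift x) (h *: v) - f x)) @ 0^' --> df.
Proof. by move=> [d <-]. Qed.

Global Instance is_derive_pair {f : V -> W1} {g : V -> W2} {x v df dg} :
  is_derive x v f df -> is_derive x v g dg ->
  is_derive x v (fun y => (f y, g y)) (df, dg).
Proof.
move=> /is_derive_cvg f' /is_derive_cvg g'.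
have fg' : (fun h => h^-1 *: (((fun y => (f y, g y)) \o shift x) (h *: v)
    - (f x, g x))) @ 0^' --> (df, dg) by exact: cvg_pair.
by split; [apply/cvg_ex; exists (df, dg) | exact: cvg_lim fg'].
Qed.

Global Instance is_derive_fst {f : V -> W1 * W2} {x v df} :
  is_derive x v f df -> is_derive x v (fun y => (f y).1) df.1.
Proof.
move=> /is_derive_cvg f'.
have f1' : (fun h => h^-1 *: (((fun y => (f y).1) \o shift x) (h *: v)
    - (f x).1)) @ 0^' --> df.1 by exact: cvg_comp f' cvg_fst.
by split; [apply/cvg_ex; exists df.1 | exact: cvg_lim f1'].
Qed.

Global Instance is_derive_snd {f : V -> W1 * W2} {x v df} :
  is_derive x v f df -> is_derive x v (fun y => (f y).2) df.2.
Proof.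
move=> /is_derive_cvg f'.
have f2' : (fun h => h^-1 *: (((fun y => (f y).2) \o shift x) (h *: v)
    - (f x).2)) @ 0^' --> df.2 by exact: cvg_comp f' cvg_snd.
by split; [apply/cvg_ex; exists df.2 | exact: cvg_lim f2'].
Qed.

End PairDerive.

Lemma scalerE (R : realType) (a b : R) : a *: b = a * b. Proof. by []. Qed.

Section OctonionDerive.
Context {R : realType} {V : normedModType R}.
Local Notation oct := (oct R).
Implicit Types (F G : V -> oct) (x v : V).

(* Rewriting [F y] as [oct_eta (F y)] lets the [let: (_, _, _, _) := _] patterns of
   [omul] and [hmul] reduce under the binder [y]. *)
Definition oct_eta (z : oct) : oct :=
  (z.1.1.1.1, z.1.1.1.2, z.1.1.2, z.1.2, (z.2.1.1.1, z.2.1.1.2, z.2.1.2, z.2.2)).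

Lemma oct_etaE (z : oct) : oct_eta z = z.
Proof. by case: z => [[[[? ?] ?] ?] [[[? ?] ?] ?]]. Qed.

Global Instance is_derive_omul {F G x v dF dG} :
  is_derive x v F dF -> is_derive x v G dG ->
  is_derive x v (fun y => omul (F y) (G y)) (omul dF (G x) + omul (F x) dG).
Proof.
move=> F' G'; rewrite -[dF]oct_etaE -[dG]oct_etaE -[F x]oct_etaE -[G x]oct_etaE.
under eq_fun do rewrite -[F _]oct_etaE -[G _]oct_etaE.
rewrite /omul /hmul /hconj /oct_eta /=.
by apply: is_derive_eq; pair_simpl; split_pairs; ring.
Qed.

Global Instance is_derive_oconj {F x v dF} :
  is_derive x v F dF -> is_derive x v (fun y => oconj (F y)) (oconj dF).
Proof.
move=> F'; rewrite -[dF]oct_etaE; under eq_fun do rewrite -[F _]oct_etaE.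
rewrite /oconj /hconj /oct_eta /=.
by apply: is_derive_eq; pair_simpl; split_pairs; ring.
Qed.

Lemma is_derive_onorm2 {F x v dF} :
  is_derive x v F dF -> is_derive x v (fun y => onorm2 (F y)) (2 * oinner (F x) dF).
Proof. by move=> F'; apply: is_derive_eq; exact: oreD_omul_conj. Qed.

Lemma is_derive_oscale {r : V -> R} {F x v dr dF} :
  is_derive x v r dr -> is_derive x v F dF ->
  is_derive x v (fun y => r y *: F y) (r x *: dF + dr *: F x).
Proof.
move=> r' F'; rewrite -[dF]oct_etaE -[F x]oct_etaE; under eq_fun do rewrite -[F _]oct_etaE.
rewrite /oct_eta; pair_simpl.
by apply: is_derive_eq; pair_simpl; split_pairs; ring.
Qed.

Definition doinv (a xi : oct) : oct :=
  (onorm2 a)^-1 *: oconj xi - (2 * oinner a xi / onorm2 a ^+ 2) *: oconj a.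

Lemma is_derive_oinv {F x v dF} : F x != 0 -> is_derive x v F dF ->
  is_derive x v (fun y => Defs.oinv (F y)) (doinv (F x) dF).
Proof.
move=> Fx0 F'; have N0 : onorm2 (F x) != 0 by rewrite onorm2_eq0.
have N' := is_derive_onorm2 F'.
have I' : is_derive x v (fun y => (onorm2 (F y))^-1)
    (- (onorm2 (F x)) ^-2 *: (2 * oinner (F x) dF)).
  by apply: DeriveDef; [exact: derivableV | rewrite deriveV // derive_val].
rewrite /Defs.oinv; apply: is_derive_eq (is_derive_oscale I' (is_derive_oconj F')) _.
by rewrite /doinv scalerE mulNr scaleNr mulrC.
Qed.

End OctonionDerive.

Section Transition01.
Context {R : realType} {V : normedModType R}.
Local Notation oct := (oct R).

Definition trans01 (p : oct * oct) : oct * oct := (odivr (one_oct R) p.1, odivr p.2 p.1).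

Definition dtrans01 (p w : oct * oct) : oct * oct :=
  (doinv p.1 w.1, omul w.2 (Defs.oinv p.1) + omul p.2 (doinv p.1 w.1)).

Lemma is_derive_trans01 {F : V -> oct * oct} {x v dF} :
  (F x).1 != 0 -> is_derive x v F dF -> is_derive x v (trans01 \o F) (dtrans01 (F x) dF).
Proof.
move=> a0 F'.
have -> : trans01 \o F = fun y => (Defs.oinv (F y).1, omul (F y).2 (Defs.oinv (F y).1)).
  by apply: funext => y; rewrite /= /trans01 /odivr omul1l.
have I' := is_derive_oinv (F := fun y => (F y).1) a0 (is_derive_fst F').
exact: is_derive_pair I' (is_derive_omul (is_derive_snd F') I').
Qed.

Implicit Types (a b xi eta : oct) (r s t : R).

(* The identities below are polynomial because they are stated for generic scalars;
   [ds2_trans01] uses them with [r = |a|^-2] and [s = -2<a,xi>/|a|^4]. *)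

Lemma onorm2_scale_conj r a : onorm2 (r *: oconj a) = r ^+ 2 * onorm2 a.
Proof. oct_ring. Qed.

Lemma onorm2_scale_conjD r s a xi :
  onorm2 (r *: oconj xi + s *: oconj a) =
  r ^+ 2 * onorm2 xi + 2 * r * s * oinner a xi + s ^+ 2 * onorm2 a.
Proof. oct_ring. Qed.

Lemma onorm2_dtrans01_2 r s a b xi eta :
  onorm2 (omul eta (r *: oconj a) + omul b (r *: oconj xi + s *: oconj a)) =
  r ^+ 2 * onorm2 eta * onorm2 a + onorm2 b * onorm2 (r *: oconj xi + s *: oconj a)
  + 2 * r ^+ 2 * oinner (omul eta (oconj a)) (omul b (oconj xi))
  + 2 * r * s * onorm2 a * oinner eta b.
Proof. oct_ring. Qed.

Lemma omul_scale_conj_conj r a b :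
  omul (r *: oconj a) (oconj (omul b (r *: oconj a))) = (r ^+ 2 * onorm2 a) *: oconj b.
Proof. oct_ring. Qed.

Lemma ore_cross_dtrans01 r s t a b xi eta :
  ore (omul (t *: oconj b)
    (omul (omul eta (r *: oconj a) + omul b (r *: oconj xi + s *: oconj a))
          (oconj (r *: oconj xi + s *: oconj a)))) =
  t * (r ^+ 2 * oinner (omul eta (oconj a)) (omul b (oconj xi))
       + r * s * onorm2 a * oinner eta b + onorm2 b * onorm2 (r *: oconj xi + s *: oconj a)).
Proof. oct_ring. Qed.

(* Polarization of the composition law [|xy|^2 = |x|^2 |y|^2]. *)
Lemma ore_cross_polar a b xi eta :
  ore (omul (omul a (oconj b)) (omul eta (oconj xi))) =
  2 * oinner a xi * oinner eta b - oinner (omul eta (oconj a)) (omul b (oconj xi)).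
Proof. oct_ring. Qed.

Lemma ds2_trans01 (p w : oct * oct) : p.1 != 0 -> ds2 (trans01 p) (dtrans01 p w) = ds2 p w.
Proof.
case: p w => a b [xi eta] /= a0; have Na : 0 < onorm2 a by exact: onorm2_gt0.
rewrite /trans01 /dtrans01 /doinv /odivr omul1l /Defs.oinv /= -scaleNr /ds2 /=.
rewrite omul_scale_conj_conj ore_cross_dtrans01 onorm2_dtrans01_2 onorm2_scale_conjD.
rewrite onorm2M !onorm2_scale_conj ore_cross_polar.
have := onorm2_ge0 b; move: Na.
move: (onorm2 a) (onorm2 b) (onorm2 xi) (onorm2 eta) (oinner a xi) (oinner eta b)
  (oinner (omul eta (oconj a)) (omul b (oconj xi))) => N B X E c e k Na B0.
by field; rewrite !gt_eqF //; lra.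
Qed.

End Transition01.

Section ChartChanges.
Context {R : realType}.
Local Notation oct := (oct R).

Definition preserves_ds2 (f : oct * oct -> oct * oct) (p : oct * oct) : Prop :=
  forall w, derivable f p w /\ ds2 (f p) ('D_w f p) = ds2 p w.

Definition oswap (p : oct * oct) : oct * oct := (p.2, p.1).

Lemma ds2_swap (p w : oct * oct) : ds2 (oswap p) (oswap w) = ds2 p w.
Proof.
case: p w => u v [xi eta]; rewrite /ds2 /=.
have -> : ore (omul (omul v (oconj u)) (omul xi (oconj eta))) =
          ore (omul (omul u (oconj v)) (omul eta (oconj xi))) by oct_ring.
by rewrite [1 + onorm2 v + _]addrAC [onorm2 eta * _ + _]addrC.
Qed.

Lemma preserves_ds2_id p : preserves_ds2 id p.
Proof. by move=> w; split; [exact: derivable_id | rewrite derive_id]. Qed.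

Lemma is_derive_oswap {V : normedModType R} {F : V -> oct * oct} {x v dF} :
  is_derive x v F dF -> is_derive x v (oswap \o F) (oswap dF).
Proof. by move=> F'; exact: is_derive_pair (is_derive_snd F') (is_derive_fst F'). Qed.

Lemma preserves_ds2_swapl f p : preserves_ds2 f p -> preserves_ds2 (oswap \o f) p.
Proof.
move=> fp w; have [/derivableP/is_derive_oswap D fw] := fp w.
by split; [exact: ex_derive | rewrite derive_val ds2_swap].
Qed.

Lemma preserves_ds2_trans01 p : p.1 != 0 -> preserves_ds2 trans01 p.
Proof.
move=> a0 w; have D : is_derive p w trans01 (dtrans01 p w).
  exact: is_derive_trans01 a0 (is_derive_id p w).
by split; [exact: ex_derive | rewrite derive_val ds2_trans01].
Qed.

Lemma preserves_ds2_trans01_swap p : p.2 != 0 -> preserves_ds2 (trans01 \o oswap) p.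
Proof.
move=> b0 w.
have D := is_derive_trans01 (F := oswap) b0 (is_derive_oswap (is_derive_id p w)).
by split; [exact: ex_derive | rewrite derive_val ds2_trans01 // ds2_swap].
Qed.

Lemma transition_diag (i : 'I_3) : transition (R := R) i i = id.
Proof.
apply: funext => -[u v]; rewrite /transition /chart_map /chart_lift.
by case: i => [[|[|[|?]]] ?] //=; rewrite !odivr1.
Qed.

Lemma preserves_ds2_transition i j p :
  hcoord j (chart_lift i p) != 0 -> preserves_ds2 (transition i j) p.
Proof.
have [<- _|ij] := eqVneq i j; first by rewrite transition_diag; exact: preserves_ds2_id.
case: p => a b; case: i ij => [[|[|[|//]]] ?]; case: j => [[|[|[|//]]] ?] //= _ H.
- by apply: preserves_ds2_trans01.
- by apply: preserves_ds2_trans01_swap.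
- by apply: preserves_ds2_trans01.
- by apply: (preserves_ds2_swapl (trans01 \o oswap)); apply: preserves_ds2_trans01_swap.
- by apply: (preserves_ds2_swapl trans01); apply: preserves_ds2_trans01.
- by apply: (preserves_ds2_swapl (trans01 \o oswap)); apply: preserves_ds2_trans01_swap.
Qed.

End ChartChanges.

Theorem theorem3p4 (R : realType) :
  (forall p w : oct R * oct R, w != 0 -> 0 < ds2 p w) /\
  (forall (i j : 'I_3) (p w : oct R * oct R),
      hcoord j (chart_lift i p) != 0 ->
      derivable (transition i j) p w /\
      ds2 (transition i j p) ('D_w (transition i j) p) = ds2 p w).
Proof.
split; first exact: ds2_gt0.
move=> i j p w H; exact: preserves_ds2_transition H w.
Qed.
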